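(* Let $n,k$ be positive integers with $T_k(n)\neq\emptyset$. Let $G\in T_k(n)$ and let $z$ be a quasi vertex of $G$. If $\alpha<0$ and ${}^0R_{\alpha}(G)$ is minimum over $T_k(n)$, then $d(z)=n-1$. If $\alpha>0$ and ${}^0R_{\alpha}(G)$ is maximum over $T_k(n)$, then $d(z)=n-1$.
   Context: All graphs are finite, simple, undirected and connected. For a graph $G$ and real $\alpha\neq 0$, the zeroth-order general Randić index is ${}^0R_{\alpha}(G)=\sum_{v\in V(G)}d(v)^{\alpha}$, where $d(v)$ is the degree of $v$. A connected graph $G$ is a $k$-generalized quasi tree if there is a subset $V_k\subset V(G)$ with $|V_k|=k$ such that $G-V_k$ is a tree, but for every subset $V_{k-1}\subset V(G)$ with $|V_{k-1}|=k-1$, $G-V_{k-1}$ is not a tree; the vertices of such a set $V_k$ are called quasi vertices of $G$. $T_k(n)$ denotes the class of $k$-generalized quasi trees of order $n$. *)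

From Stdlib Require Import Reals.
From mathcomp Require Import all_boot.
Set Implicit Arguments. Unset Strict Implicit. Unset Printing Implicit Defensive.

Section Graphs.
Variable T : finType.

Definition simple_graph (e : rel T) : Prop := symmetric e /\ irreflexive e.

Definition deg (e : rel T) (v : T) : nat := #|[set u | e v u]|.

Definition induced (e : rel T) (S : {set T}) : rel T :=
  [rel x y | [&& e x y, x \in S & y \in S]].

Definition connected_on (e : rel T) (S : {set T}) : Prop :=
  forall x y, x \in S -> y \in S -> connect (induced e S) x y.

Definition acyclic_on (e : rel T) (S : {set T}) : Prop :=
  forall p : seq T, uniq p -> 3 <= size p -> {subset p <= S} -> ~~ cycle e p.

Definition tree_on (e : rel T) (S : {set T}) : Prop :=
  S != set0 /\ connected_on e S /\ acyclic_on e S.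

Definition connected_graph (e : rel T) : Prop := connected_on e setT.

Definition removal_is_tree (e : rel T) (V : {set T}) : Prop := tree_on e (~: V).

Definition gen_quasi_tree (e : rel T) (k : nat) : Prop :=
  (exists V : {set T}, #|V| = k /\ removal_is_tree e V) /\
  (forall V : {set T}, #|V| = k.-1 -> ~ removal_is_tree e V).

Definition quasi_vertex (e : rel T) (k : nat) (z : T) : Prop :=
  exists V : {set T}, [/\ #|V| = k, z \in V & removal_is_tree e V].

Definition zeroth_randic (alpha : R) (e : rel T) : R :=
  \big[Rplus/R0]_(v : T) Rpower (INR (deg e v)) alpha.
End Graphs.

Definition in_Tk {n : nat} (k : nat) (e : rel 'I_n) : Prop :=
  [/\ simple_graph e, connected_graph e & gen_quasi_tree e k].

(** Let [V] be a set of [k] quasi vertices of [G] and let [G'] be [G] with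
    every vertex of [V] joined to all other vertices.  [G' - V] is the same
    tree as [G - V], and no [k-1] vertices can be removed from [G'] to leave
    a tree: if two vertices of [V] survive they span a triangle with any third
    vertex, and if only one survives it spans a triangle with an edge of the
    tree [G - V] (which has at least two vertices by minimality of [k]).  So
    [G'] lies in [T_k(n)], its degrees dominate those of [G], and [z], being
    in [V], has degree [n-1] in [G'].  If [d(z) < n-1], strict monotonicity
    of [x ^ alpha] on positive degrees makes [G'] strictly better than [G]. *)

From HB Require Import structures.
From Stdlib Require Import Reals Lra.
From mathcomp Require Import all_boot zify.
Set Implicit Arguments. Unset Strict Implicit. Unset Printing Implicit Defensive.

Lemma Rplus_assoc_law : associative Rplus.
Proof. by move=> x y z; rewrite Rplus_assoc. Qed.

HB.instance Definition _ :=
  SemiGroup.isComLaw.Build R Rplus Rplus_assoc_law Rplus_comm.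

Lemma big_Rplus_lt (T : finType) (F G : T -> R) (z : T) :
  (forall i, Rle (F i) (G i)) -> Rlt (F z) (G z) ->
  Rlt (\big[Rplus/R0]_(i : T) F i) (\big[Rplus/R0]_(i : T) G i).
Proof.
move=> leFG ltFGz; rewrite (bigD1 z) //= [X in Rlt _ X](bigD1 z) //=.
apply: Rplus_lt_le_compat => //.
by apply: (big_ind2 Rle) => //; [lra | move=> *; lra].
Qed.

Lemma Rlt_Rpower_l_neg (a b c : R) :
  Rlt c 0 -> Rlt 0 a /\ Rlt a b -> Rlt (Rpower b c) (Rpower a c).
Proof.
move=> c_lt0 [a_gt0 ab]; apply: exp_increasing.
by have := ln_increasing a b a_gt0 ab; nra.
Qed.

Lemma Rle_Rpower_l_neg (a b c : R) :
  Rlt c 0 -> Rlt 0 a /\ Rle a b -> Rle (Rpower b c) (Rpower a c).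
Proof.
move=> c_lt0 [a_gt0 [ab | <-]]; last exact: Rle_refl.
by left; apply: Rlt_Rpower_l_neg.
Qed.

Section RandicMonotone.
Variables (T : finType) (e e' : rel T) (z : T).
Hypothesis deg_e_gt0 : forall v, 0 < deg e v.
Hypothesis deg_e_le : forall v, deg e v <= deg e' v.
Hypothesis deg_e_ltz : deg e z < deg e' z.

Let INR_deg_gt0 v : Rlt 0 (INR (deg e v)).
Proof. exact/lt_0_INR/ltP. Qed.

Let INR_deg_le v : Rlt 0 (INR (deg e v)) /\ Rle (INR (deg e v)) (INR (deg e' v)).
Proof. by split; [exact: INR_deg_gt0 | exact/le_INR/leP]. Qed.

Let INR_deg_ltz : Rlt 0 (INR (deg e z)) /\ Rlt (INR (deg e z)) (INR (deg e' z)).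
Proof. by split; [exact: INR_deg_gt0 | exact/lt_INR/ltP]. Qed.

Lemma zeroth_randic_lt_pos (alpha : R) :
  Rlt 0 alpha -> Rlt (zeroth_randic alpha e) (zeroth_randic alpha e').
Proof.
move=> alpha_gt0; apply: (big_Rplus_lt (z := z)) => [v|].
- by apply: Rle_Rpower_l; [left | exact: INR_deg_le].
- exact: Rlt_Rpower_l.
Qed.

Lemma zeroth_randic_lt_neg (alpha : R) :
  Rlt alpha 0 -> Rlt (zeroth_randic alpha e') (zeroth_randic alpha e).
Proof.
move=> alpha_lt0; apply: (big_Rplus_lt (z := z)) => [v|].
- exact: Rle_Rpower_l_neg.
- exact: Rlt_Rpower_l_neg.
Qed.

End RandicMonotone.

Section Trees.
Variables (T : finType) (e : rel T).

Lemma connect_induced_neighbor (S : {set T}) (x y : T) :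
  connect (induced e S) x y -> x != y -> exists2 u, e x u & u \in S.
Proof.
case/connectP => [[|u p]] /=; first by move=> _ ->; rewrite eqxx.
by case/andP => /and3P[exu _ uS] _ _ _; exists u.
Qed.

Lemma acyclic_on_no_triangle (S : {set T}) (x y w : T) : acyclic_on e S ->
  x \in S -> y \in S -> w \in S -> x != y -> y != w -> x != w ->
  e x y -> e y w -> e w x -> False.
Proof.
move=> acyc xS yS wS xy yw xw exy eyw ewx.
have uniq_xyw : uniq [:: x; y; w] by rewrite /= !inE negb_or xy xw yw.
have sub_xyw : {subset [:: x; y; w] <= S}.
  by move=> u; rewrite !inE => /or3P[] /eqP->.
by have := acyc _ uniq_xyw isT sub_xyw; rewrite /= exy eyw ewx.
Qed.

Lemma deg_gt0 : connected_graph e -> 1 < #|T| -> forall v, 0 < deg e v.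
Proof.
move=> conn T_gt1 v.
have /card_gt0P[w] : 0 < #|[set~ v]| by rewrite cardsC1; case: #|T| T_gt1.
rewrite !inE eq_sym => vw.
have [u evu _] := connect_induced_neighbor (conn v w (in_setT v) (in_setT w)) vw.
by apply/card_gt0P; exists u; rewrite inE.
Qed.

Lemma tree_on_edge (u t : T) : simple_graph e -> e u t -> tree_on e [set u; t].
Proof.
move=> [e_sym e_irr] eut; have etu : e t u by rewrite e_sym.
split; first by apply/set0Pn; exists u; rewrite !inE eqxx.
split.
- move=> x y; rewrite !inE => /orP[] /eqP-> /orP[] /eqP->; try exact: connect0;
    by apply: connect1; rewrite /induced /= !inE !eqxx /= ?orbT ?andbT.
- move=> p p_uniq p_size p_sub.
  have : size p <= size [:: u; t].
    by apply: uniq_leq_size => // x /p_sub; rewrite !inE.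
  by rewrite /=; case: (size p) p_size => [|[|[|]]].
Qed.

Lemma tree_on_has_edge (S : {set T}) :
  tree_on e S -> 1 < #|S| -> exists a b, [/\ a \in S, b \in S & e a b].
Proof.
move=> [_ [conn _]] S_gt1.
have [a aS] : exists a, a \in S by apply/card_gt0P; case: #|S| S_gt1.
have /card_gt0P[b] : 0 < #|S :\ a| by move: S_gt1; rewrite (cardsD1 a) aS.
rewrite !inE eq_sym => /andP[ab bS].
have [c eac cS] := connect_induced_neighbor (conn a b aS bS) ab.
by exists a, c.
Qed.

Lemma removal_tree_card_gt1 (k : nat) (V : {set T}) :
  simple_graph e -> connected_graph e -> gen_quasi_tree e k -> 0 < k ->
  #|V| = k -> removal_is_tree e V -> 1 < #|~: V|.
Proof.
move=> e_simple conn [_ k_min] k_gt0 cardV [CV_neq0 _].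
rewrite ltnNge; apply/negP => CV_le1.
have /cards1P[t CV_t] : #|~: V| == 1.
  by move: CV_neq0; rewrite -card_gt0; case: #|~: V| CV_le1 => [|[]].
have notV x : (x \notin V) = (x == t) by rewrite -in_setC CV_t inE.
have [u0 u0V] : exists u0, u0 \in V by apply/card_gt0P; rewrite cardV.
have tu0 : t != u0 by apply: contraTneq u0V => <-; rewrite notV.
have [u etu _] := connect_induced_neighbor (conn t u0 (in_setT t) (in_setT u0)) tu0.
have uV : u \in V.
  by rewrite -[u \in V]negbK notV; apply: contraTneq etu => ->; rewrite e_simple.2.
apply: (k_min (V :\ u)); first by rewrite -cardV (cardsD1 u V) uV.
rewrite /removal_is_tree; have -> : ~: (V :\ u) = [set u; t].
  by apply/setP => x; rewrite !inE negb_and negbK notV.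
by apply: tree_on_edge; rewrite // e_simple.1.
Qed.

End Trees.

Definition saturate (T : finType) (e : rel T) (V : {set T}) : rel T :=
  [rel x y | (x != y) && [|| e x y, x \in V | y \in V]].

Section Saturate.
Variables (T : finType) (e : rel T) (V : {set T}).
Hypothesis e_simple : simple_graph e.

Let e_neq x y : e x y -> x != y.
Proof. by apply: contraTneq => ->; rewrite e_simple.2. Qed.

Lemma saturate_simple : simple_graph (saturate e V).
Proof.
split=> [x y | x]; rewrite /saturate /=; last by rewrite eqxx.
by rewrite eq_sym e_simple.1 [(x \in V) || _]orbC.
Qed.

Lemma saturate_connected : V != set0 -> connected_graph (saturate e V).
Proof.
case/set0Pn=> v vV.
have adj_v x : x != v ->
    induced (saturate e V) setT x v && induced (saturate e V) setT v x.
  by move=> xv; rewrite /induced /saturate /= !inE xv eq_sym xv vV !orbT.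
move=> x y _ _; apply: (connect_trans (y := v)).
- have [-> | /adj_v/andP[xv _]] := eqVneq x v; [exact: connect0 | exact: connect1].
- have [-> | /adj_v/andP[_ vy]] := eqVneq y v; [exact: connect0 | exact: connect1].
Qed.

Let saturate_eq_compl : {in ~: V &, saturate e V =2 e}.
Proof.
move=> x y; rewrite !inE => /negbTE xV /negbTE yV.
rewrite /saturate /= xV yV !orbF andbC.
by case exy: (e x y) => //=; apply: e_neq.
Qed.

Lemma saturate_removal_is_tree :
  removal_is_tree e V -> removal_is_tree (saturate e V) V.
Proof.
move=> [CV_neq0 [conn acyc]]; split=> //; split.
- have eq_ind : induced (saturate e V) (~: V) =2 induced e (~: V).
    move=> x y; rewrite /induced /=.
    have [xS | _] := boolP (x \in ~: V); last by rewrite !andbF.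
    have [yS | _] := boolP (y \in ~: V); last by rewrite !andbF.
    by rewrite saturate_eq_compl.
  by move=> x y xS yS; rewrite (eq_connect eq_ind) conn.
- move=> p p_uniq p_size p_sub.
  rewrite (eq_in_cycle saturate_eq_compl); first exact: acyc.
  by apply/allP => x /p_sub.
Qed.

Lemma saturate_triangle (S : {set T}) (v x y : T) :
  v \in V -> v \in S -> x \in S -> y \in S -> v != x -> v != y ->
  saturate e V x y -> ~ acyclic_on (saturate e V) S.
Proof.
move=> vV vS xS yS vx vy sxy acyc.
apply: (acyclic_on_no_triangle acyc vS xS yS vx _ vy _ sxy).
- by case/andP: sxy.
- by rewrite /saturate /= vx vV !orbT.
- by rewrite /saturate /= eq_sym vy vV !orbT.
Qed.

Lemma saturate_no_smaller_removal_tree (k : nat) (U : {set T}) :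
  0 < k -> #|V| = k -> removal_is_tree e V -> 1 < #|~: V| -> #|U| = k.-1 ->
  ~ removal_is_tree (saturate e V) U.
Proof.
move=> k_gt0 cardV treeV CV_gt1 cardU [_ [_ acycU]].
have cardT : #|T| = k + #|~: V| by rewrite -cardV cardsC.
have [v vV vU] : exists2 v, v \in V & v \notin U.
  by apply/subsetPn/negP => /subset_leq_card; rewrite cardV cardU; lia.
have VvU : V :\ v \subset U.
  apply/subsetP => w; rewrite !inE => /andP[wv wV].
  apply/negPn/negP => wU.
  have small : #|U :|: [set v; w]| < #|T|.
    by rewrite (leq_ltn_trans (leq_card_setU _ _)) // cards2 cardT cardU; lia.
  have [c _] : exists2 c, c \in [set: T] & c \notin U :|: [set v; w].
    by apply/subsetPn; apply: contraTN small => /subset_leq_card; rewrite cardsT -leqNgt.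
  rewrite !inE !negb_or => /andP[cU /andP[cv cw]].
  apply: (saturate_triangle (S := ~: U) (x := w) (y := c) vV _ _ _ _ _ _ acycU);
    rewrite ?inE 1?eq_sym //.
  by rewrite /saturate /= eq_sym cw wV orbT.
have defU : U = V :\ v.
  apply/eqP; rewrite eq_sym eqEcard VvU /= cardU.
  by have := cardsD1 v V; rewrite vV cardV; lia.
have [a [b [aCV bCV eab]]] := tree_on_has_edge treeV CV_gt1.
have CV_CU x : x \in ~: V -> x \in ~: U.
  by rewrite defU !inE negb_and => ->; rewrite orbT.
have v_neq x : x \in ~: V -> v != x by rewrite inE; apply: contraNneq => <-.
apply: (saturate_triangle vV _ (CV_CU _ aCV) (CV_CU _ bCV) (v_neq _ aCV)
          (v_neq _ bCV) _ acycU).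
- by rewrite inE.
- by rewrite /saturate /= eab e_neq.
Qed.

Lemma saturate_gen_quasi_tree (k : nat) :
  0 < k -> #|V| = k -> removal_is_tree e V -> 1 < #|~: V| ->
  gen_quasi_tree (saturate e V) k.
Proof.
move=> k_gt0 cardV treeV CV_gt1; split.
- by exists V; split; last exact: saturate_removal_is_tree.
- by move=> U; exact: saturate_no_smaller_removal_tree.
Qed.

Lemma deg_saturate_le (v : T) : deg e v <= deg (saturate e V) v.
Proof.
apply/subset_leq_card/subsetP => u; rewrite !inE => evu.
by rewrite /saturate /= evu e_neq.
Qed.

Lemma deg_saturate_mem (v : T) : v \in V -> deg (saturate e V) v = #|T|.-1.
Proof.
move=> vV; rewrite /deg -(cardsC1 v); apply: eq_card => u.
by rewrite !inE /saturate /= vV orbT andbT eq_sym.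
Qed.

End Saturate.

Theorem mainTheorem7 (n k : nat) (hn : 0 < n) (hk : 0 < k)
  (hne : exists e0 : rel 'I_n, in_Tk k e0)
  (e : rel 'I_n) (he : in_Tk k e) (z : 'I_n) (hz : quasi_vertex e k z)
  (alpha : R) :
  (Rlt alpha 0 ->
     (forall e' : rel 'I_n, in_Tk k e' ->
        Rle (zeroth_randic alpha e) (zeroth_randic alpha e')) ->
     deg e z = n.-1) /\
  (Rlt 0 alpha ->
     (forall e' : rel 'I_n, in_Tk k e' ->
        Rle (zeroth_randic alpha e') (zeroth_randic alpha e)) ->
     deg e z = n.-1).
Proof.
case: hz => V [cardV zV treeV]; case: (he) => e_simple e_conn e_gqt.
have CV_gt1 := removal_tree_card_gt1 e_simple e_conn e_gqt hk cardV treeV.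
have sat_Tk : in_Tk k (saturate e V).
  split; [exact: saturate_simple | | exact: saturate_gen_quasi_tree].
  by apply: saturate_connected; apply/set0Pn; exists z.
have deg_pos : forall v, 0 < deg e v.
  by apply: deg_gt0 => //; rewrite -(cardsC V); lia.
have deg_le := deg_saturate_le V e_simple.
have deg_ltz : deg e z != n.-1 -> deg e z < deg (saturate e V) z.
  have := deg_le z; rewrite deg_saturate_mem // card_ord => le_z ne_z.
  by rewrite ltn_neqAle ne_z.
split=> alpha_sgn extremal; apply/eqP/negPn/negP => /deg_ltz deg_lt;
  have := extremal _ sat_Tk; apply: Rlt_not_le.
- exact: (zeroth_randic_lt_neg deg_pos deg_le deg_lt).
- exact: (zeroth_randic_lt_pos deg_pos deg_le deg_lt).
Qed.
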